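(* Let $X=(X_1,\dots,X_T)$ be a random vector of nonnegative integer-valued random variables with finite second moments and $\mathrm{Var}(X_t)>0$ for all $t$. For $p\in(0,1]$, let $Y^{(p)}=(Y_1,\dots,Y_T)$ be defined by: conditionally on $X$, the $Y_t$ are independent with $Y_t\sim B(X_t,p)$ (Binomial with $X_t$ trials and success probability $p$). Then for all $i,j$, the magnitude $|\rho_{Y_i,Y_j}|$ of the Pearson correlation between $Y_i$ and $Y_j$ is a monotonically non-decreasing function of $p$ on $(0,1]$.
   Context: $X$ is the ground truth time series of event counts and $Y$ the observed signal in which each event is observed independently with probability $p$ (the sampling rate). The Pearson correlation is $\rho_{Y_i,Y_j}=\mathrm{Cov}(Y_i,Y_j)/(\sigma_{Y_i}\sigma_{Y_j})$. *)

From HB Require Import structures.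
From mathcomp Require Import all_boot all_order all_algebra.
From mathcomp Require Import all_classical all_reals all_analysis.
Set Implicit Arguments. Unset Strict Implicit. Unset Printing Implicit Defensive.
Import Order.TTheory GRing.Theory Num.Theory.
Local Open Scope classical_set_scope.
Local Open Scope ring_scope.

Definition correlation d (Om : measurableType d) (R : realType)
  (P : probability Om R) (X Y : Om -> R) : R :=
  fine (covariance P X Y) / Num.sqrt (fine ('V_P[X]) * fine ('V_P[Y])).

(* Y is obtained from X by binomial thinning with rate p: conditionally on
   X = x, the Y_t are independent with Y_t ~ B(x_t, p). *)
Definition binomial_thinning d (Om : measurableType d) (R : realType)
  (P : probability Om R) (T : nat) (X Y : 'I_T -> Om -> R) (p : R) : Prop :=
  forall x y : 'I_T -> nat,
    P [set w | forall t, X t w = (x t)%:R /\ Y t w = (y t)%:R] =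
    (P [set w | forall t, X t w = (x t)%:R] *
     (\prod_(t < T) binomial_pmf (x t) p (y t))%:E)%E.

From HB Require Import structures.
From mathcomp Require Import all_boot all_order all_algebra.
From mathcomp Require Import all_classical all_reals all_analysis.
From mathcomp Require Import measurable_realfun ring.
Import Order.TTheory GRing.Theory Num.Theory.

(* Conditionally on X, each Y_t is a sum of X_t independent Bernoulli(p)
   variables and the Y_t are independent, so E[Y_i] = p E[X_i] and
   E[Y_i Y_j] = p^2 E[X_i X_j] + [i = j] p (1 - p) E[X_i].  Hence
   Cov(Y_i, Y_j) = p^2 Cov(X_i, X_j) for i <> j, while
   Var(Y_i) = p^2 Var(X_i) + p (1 - p) E[X_i] = p^2 (Var(X_i) + (1/p - 1) E[X_i]).
   The factors p^2 cancel in the correlation, which becomes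
   Cov(X_i, X_j) / sqrt(U_i(p) U_j(p)) with U_i(p) = Var(X_i) + (1/p - 1) E[X_i];
   as E[X_i] >= 0, U_i is nonincreasing in p. *)

Set Implicit Arguments.
Unset Strict Implicit.
Unset Printing Implicit Defensive.

Local Open Scope ring_scope.

Section binomial_moments.
Variables (R : realType) (p : R).

Definition binomial_moment (k n : nat) : R :=
  \sum_(j < n.+1) j%:R ^+ k * binomial_pmf n p j.

Lemma binomial_pmf_small n j : (n < j)%N -> binomial_pmf n p j = 0.
Proof. by move=> ltnj; rewrite /binomial_pmf bin_small. Qed.

Lemma sum_binomial_pmf_widen n m (F : nat -> R) : (n < m)%N ->
  \sum_(j < m) F j * binomial_pmf n p j = \sum_(j < n.+1) F j * binomial_pmf n p j.
Proof.
move=> ltnm; rewrite (big_ord_widen m (fun j => F j * binomial_pmf n p j) ltnm).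
rewrite [RHS]big_mkcond; apply: eq_bigr => j _.
by case: ifPn => //; rewrite -leqNgt => /binomial_pmf_small ->; rewrite mulr0.
Qed.

Lemma binomial_pmf_absorb n j :
  j.+1%:R * binomial_pmf n.+1 p j.+1 = p * n.+1%:R * binomial_pmf n p j.
Proof.
rewrite /binomial_pmf /unstable.onem subSS.
rewrite -[_ *+ 'C(n.+1, _)]mulr_natr -[_ *+ 'C(n, _)]mulr_natr exprS.
have := congr1 (GRing.natmul (1 : R)) (mul_bin_diag n.+1 j); rewrite !natrM => absorb.
transitivity (p * (p ^+ j * (1 - p) ^+ (n - j)) * (j.+1%:R * 'C(n.+1, j.+1)%:R)).
  by ring.
by rewrite -absorb; ring.
Qed.

Lemma binomial_moment0 n : binomial_moment 0 n = 1.
Proof.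
rewrite /binomial_moment; under eq_bigr do rewrite expr0 mul1r /binomial_pmf mulrC.
rewrite -exprDn_comm; last exact: mulrC.
by rewrite /unstable.onem subrK expr1n.
Qed.

Lemma binomial_momentS k n : binomial_moment k.+1 n.+1 =
  p * n.+1%:R * \sum_(j < n.+1) j.+1%:R ^+ k * binomial_pmf n p j.
Proof.
rewrite /binomial_moment big_ord_recl /= expr0n mul0r add0r mulr_sumr.
apply: eq_bigr => j _; rewrite /bump add1n exprS -mulrA mulrCA binomial_pmf_absorb.
by ring.
Qed.

Lemma binomial_moment1 n : binomial_moment 1 n = n%:R * p.
Proof.
case: n => [|n]; first by rewrite /binomial_moment big_ord1 /=; ring.
rewrite binomial_momentS.
have -> : \sum_(j < n.+1) j.+1%:R ^+ 0 * binomial_pmf n p j = binomial_moment 0 n.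
  by apply: eq_bigr => j _; rewrite !expr0.
by rewrite binomial_moment0 mulr1 mulrC.
Qed.

Lemma binomial_moment2 n :
  binomial_moment 2 n = (n%:R * p) ^+ 2 + p * (1 - p) * n%:R.
Proof.
case: n => [|n]; first by rewrite /binomial_moment big_ord1 /=; ring.
rewrite binomial_momentS.
have -> : \sum_(j < n.+1) j.+1%:R ^+ 1 * binomial_pmf n p j =
          binomial_moment 1 n + binomial_moment 0 n.
  by rewrite -big_split; apply: eq_bigr => j _; rewrite /= expr1 expr0 -addn1 natrD; ring.
by rewrite binomial_moment1 binomial_moment0 -addn1 natrD; ring.
Qed.

End binomial_moments.

Lemma prodr_delta (R : comRingType) (T : nat) (G : 'I_T -> nat -> R) (i : 'I_T) :
  (forall t, G t 0%N = 1) -> \prod_t G t (t == i : nat) = G i 1%N.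
Proof.
by move=> G0; rewrite (bigD1 i) //= eqxx big1 ?mulr1 // => t /negbTE ->.
Qed.

Lemma prodr_delta2 (R : comRingType) (T : nat) (G : 'I_T -> nat -> R) (i j : 'I_T) :
  (forall t, G t 0%N = 1) ->
  \prod_t G t ((t == i) + (t == j))%N = if i == j then G i 2%N else G i 1%N * G j 1%N.
Proof.
move=> G0; have [<-|nij] := eqVneq i j.
  by rewrite (bigD1 i) //= eqxx big1 ?mulr1 // => t /negbTE ->.
rewrite (bigD1 i) //= eqxx (negbTE nij) (bigD1 j) 1?eq_sym //=.
by rewrite eqxx (negbTE nij) big1 ?mulr1 // => t /andP[/negbTE -> /negbTE ->].
Qed.

Definition thinned_variance (R : ringType) (p m v : R) : R :=
  p ^+ 2 * v + p * (1 - p) * m.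

Lemma thinned_varianceE (R : fieldType) (p m v : R) : p != 0 ->
  thinned_variance p m v = p ^+ 2 * (v + (p^-1 - 1) * m).
Proof. by move=> p0; rewrite /thinned_variance; field. Qed.

Lemma thinned_variance_gt0 (R : realFieldType) (p m v : R) :
  0 < p <= 1 -> 0 <= m -> 0 < v -> 0 < thinned_variance p m v.
Proof.
move=> /andP[p0 p1] m0 v0; apply: ltr_wpDr; last by rewrite mulr_gt0 ?exprn_gt0.
by rewrite mulr_ge0 // mulr_ge0 ?subr_ge0 // ltW.
Qed.

Lemma scaled_thinned_variance_le (R : realFieldType) (p q m v : R) :
  0 < p <= q -> q <= 1 -> 0 <= m -> 0 < v ->
  0 < v + (q^-1 - 1) * m <= v + (p^-1 - 1) * m.
Proof.
move=> /andP[p0 pq] q1 m0 v0; have q0 := lt_le_trans p0 pq.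
have q1' : 0 <= q^-1 - 1 by rewrite subr_ge0 invr_ge1 ?q1 ?unitf_gt0.
have qp : q^-1 <= p^-1 by rewrite lef_pV2 ?posrE.
apply/andP; split; first by rewrite ltr_wpDr ?mulr_ge0.
by rewrite lerD2l ler_wpM2r // lerD2r.
Qed.

Lemma norm_div_sqrtM_le (R : rcfType) (c a b a' b' : R) :
  0 < a' <= a -> 0 < b' <= b ->
  `|c / Num.sqrt (a * b)| <= `|c / Num.sqrt (a' * b')|.
Proof.
move=> /andP[a'0 aa'] /andP[b'0 bb'].
have s0 (x y : R) : 0 < x -> 0 < y -> 0 < Num.sqrt (x * y).
  by move=> x0 y0; rewrite sqrtr_gt0 mulr_gt0.
have a0 := lt_le_trans a'0 aa'; have b0 := lt_le_trans b'0 bb'.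
rewrite !normrM !normfV (gtr0_norm (s0 _ _ a0 b0)) (gtr0_norm (s0 _ _ a'0 b'0)).
apply: ler_wpM2l => //; rewrite lef_pV2 ?posrE ?s0 //.
by apply: ler_wsqrtr; rewrite ler_pM // ltW.
Qed.

Lemma thinned_correlation_le (R : rcfType) (p q c mi mj vi vj : R) :
  0 < p <= q -> q <= 1 -> 0 <= mi -> 0 <= mj -> 0 < vi -> 0 < vj ->
  `|p ^+ 2 * c / Num.sqrt (thinned_variance p mi vi * thinned_variance p mj vj)|
  <= `|q ^+ 2 * c / Num.sqrt (thinned_variance q mi vi * thinned_variance q mj vj)|.
Proof.
move=> /andP[p0 pq] q1 mi0 mj0 vi0 vj0.
have q0 := lt_le_trans p0 pq; have p1 := le_trans pq q1.
have scaleE (r a b : R) : 0 < r -> 0 <= a -> 0 <= b ->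
    r ^+ 2 * c / Num.sqrt (r ^+ 2 * a * (r ^+ 2 * b)) = c / Num.sqrt (a * b).
  move=> r0 a0 b0; have -> : r ^+ 2 * a * (r ^+ 2 * b) = (r ^+ 2) ^+ 2 * (a * b) by ring.
  rewrite sqrtrM ?exprn_ge0 ?ltW //.
  rewrite sqrtr_sqr gtr0_norm ?exprn_gt0 // invfM mulrACA divff ?mul1r //.
  by rewrite expf_neq0 ?gt_eqF.
have scale_ge0 (r m v : R) :
    0 < r -> r <= 1 -> 0 <= m -> 0 < v -> 0 <= v + (r^-1 - 1) * m.
  move=> r0 r1 m0 v0; have rr : 0 < r <= r by rewrite r0 lexx.
  by case/andP: (scaled_thinned_variance_le rr r1 m0 v0) => /ltW.
rewrite !thinned_varianceE ?gt_eqF // !scaleE ?scale_ge0 //.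
by apply: norm_div_sqrtM_le; apply: scaled_thinned_variance_le; rewrite ?p0.
Qed.

Local Open Scope classical_set_scope.

Lemma measurable_forall d (Om : measurableType d) (I : finType) (F : I -> set Om) :
  (forall i, measurable (F i)) -> measurable [set w | forall i, F i w].
Proof.
move=> mF; have -> : [set w | forall i, F i w] = \bigcap_(i in [set: I]) F i.
  by apply/seteqP; split => w /= Fw i //; exact: Fw.
by apply: fin_bigcap_measurable => //; exact: finite_finset.
Qed.

Lemma expectation_sqr_lty_Lfun2 d (Om : measurableType d) (R : realType)
    (P : probability Om R) (f : Om -> R) :
  measurable_fun setT f -> ('E_P[f ^+ 2] < +oo)%E -> f \in Lfun P 2%:E.
Proof.
move=> mf; rewrite unlock => f2_lty.
rewrite inE; apply/andP; split; first by rewrite inE.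
rewrite inE /= /finite_norm unlock /Lnorm poweR_lty //; apply: le_lt_trans f2_lty.
rewrite le_eqVlt; apply/orP; left; apply/eqP; apply: eq_integral => w _ /=.
by rewrite powR_mulrn ?normr_ge0 // real_normK // num_real.
Qed.

Section binomial_thinning.
Context d (Om : measurableType d) (R : realType) (P : probability Om R) (T : nat)
  (X Y : 'I_T -> {RV P >-> R}) (p : R).
Hypotheses (p01 : 0 <= p <= 1) (Xnat : forall t w, exists n : nat, X t w = n%:R)
  (thin : binomial_thinning P (fun t => X t : Om -> R) (fun t => Y t : Om -> R) p).

Local Notation outcome := {ffun 'I_T -> nat}.
Local Notation range x := {ffun 'I_T -> 'I_(\max_t x t).+1}.

Definition eventX (x : outcome) : set Om := [set w | forall t, X t w = (x t)%:R].

Definition eventXY (x : outcome) (y : range x) : set Om :=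
  [set w | forall t, X t w = (x t)%:R /\ Y t w = (y t : nat)%:R].

Definition thin_pmf (x : outcome) (y : range x) : R :=
  \prod_t binomial_pmf (x t) p (y t).

(* [thin] determines Y only up to null sets, so integrals are computed on
   [thin_support], the union of the atoms {X = x, Y = y} with y bounded by
   max x (binomial_pmf vanishes beyond); its complement is null
   (measure_thin_supportC). *)
Definition eventX_thin (x : outcome) : set Om :=
  \big[setU/set0]_(y <- enum (range x)) eventXY y.

Definition thin_support : set Om :=
  \bigcup_n oapp eventX_thin set0 (@pickle_inv outcome n).

Lemma measurable_eventX (x : outcome) : measurable (eventX x).
Proof.
apply: (measurable_forall (F := fun t => X t @^-1` [set (x t)%:R])) => t.
exact: measurable_funPTI (measurable_set1 _).
Qed.

Lemma measurable_eventXY (x : outcome) (y : range x) : measurable (eventXY y).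
Proof.
apply: (measurable_forall
  (F := fun t => X t @^-1` [set (x t)%:R] `&` Y t @^-1` [set (y t : nat)%:R])) => t.
by apply: measurableI; exact: measurable_funPTI (measurable_set1 _).
Qed.

Lemma measurable_eventX_thin (x : outcome) : measurable (eventX_thin x).
Proof. by apply: bigsetU_measurable => y _; exact: measurable_eventXY. Qed.

Local Hint Resolve measurable_eventX measurable_eventXY measurable_eventX_thin : core.

Lemma measurable_thin_support : measurable thin_support.
Proof.
apply: bigcupT_measurable => n; case: pickle_inv => [x|] /=; last exact: measurable0.
exact: measurable_eventX_thin.
Qed.

Lemma eventX_thin_sub (x : outcome) : eventX_thin x `<=` eventX x.
Proof. by move=> w; rewrite /eventX_thin -bigcup_seq => -[y _ XYw] t; case: (XYw t). Qed.

Lemma eventX_inj (x x' : outcome) w : eventX x w -> eventX x' w -> x = x'.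
Proof.
move=> Xw X'w; apply/ffunP => t; apply/eqP; rewrite -(eqr_nat R).
by rewrite -Xw -X'w.
Qed.

Lemma trivIset_eventXY (x : outcome) : trivIset [set` enum (range x)] (@eventXY x).
Proof.
move=> y y' _ _ [w [XYw XY'w]]; apply/ffunP => t; apply/val_inj/eqP.
by rewrite -(eqr_nat R); case: (XYw t) => _ <-; case: (XY'w t) => _ <-.
Qed.

Lemma trivIset_thin_support :
  trivIset setT (fun n => oapp eventX_thin set0 (@pickle_inv outcome n)).
Proof.
move=> n m _ _ [w []].
case En: pickle_inv => [x|] //= Xw; case Em: pickle_inv => [x'|] //= X'w.
have xx' := eventX_inj (eventX_thin_sub Xw) (eventX_thin_sub X'w).
by rewrite -(@pickle_invK outcome n) -(@pickle_invK outcome m) En Em xx'.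
Qed.

Lemma thin_pmf_ge0 (x : outcome) (y : range x) : 0 <= thin_pmf y.
Proof. by apply: prodr_ge0 => t _; exact: binomial_pmf_ge0. Qed.

Lemma sum_thin_pmf_prod (x : outcome) (phi : 'I_T -> nat -> R) :
  \sum_(y : range x) (\prod_t phi t (y t)) * thin_pmf y =
  \prod_t \sum_(k < (x t).+1) phi t k * binomial_pmf (x t) p k.
Proof.
rewrite (eq_bigr (fun y : range x => \prod_t (phi t (y t) * binomial_pmf (x t) p (y t))));
  last by move=> y _; rewrite big_split.
transitivity (\prod_t \sum_(k < (\max_t x t).+1) phi t k * binomial_pmf (x t) p k).
  by rewrite bigA_distr_bigA.
apply: eq_bigr => t _; apply: sum_binomial_pmf_widen.
by rewrite ltnS; exact: (leq_bigmax t).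
Qed.

Lemma sum_thin_pmf (x : outcome) : \sum_(y : range x) thin_pmf y = 1.
Proof.
transitivity (\sum_(y : range x) (\prod_t (fun _ _ => 1 : R) t (y t)) * thin_pmf y).
  by apply: eq_bigr => y _; rewrite big1 ?mul1r.
rewrite (sum_thin_pmf_prod x (fun _ _ => 1)) big1 // => t _.
rewrite -[RHS](binomial_moment0 p (x t)).
by apply: eq_bigr => k _; rewrite expr0.
Qed.

Lemma measure_eventXY (x : outcome) (y : range x) :
  P (eventXY y) = (P (eventX x) * (thin_pmf y)%:E)%E.
Proof. exact: thin x (fun t => y t). Qed.

Lemma integral_eventX_thin (x : outcome) (h : Om -> \bar R) (c : range x -> R) :
    measurable_fun (eventX_thin x) h -> (forall y, 0 <= c y) ->
    (forall y w, eventXY y w -> h w = (c y)%:E) ->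
  (\int[P]_(w in eventX_thin x) h w =
   (fine (P (eventX x)) * \sum_(y : range x) c y * thin_pmf y)%:E)%E.
Proof.
move=> mh c0 hc; have PX : P (eventX x) = (fine (P (eventX x)))%:E.
  by rewrite fineK // fin_num_measure.
rewrite ge0_integral_bigsetU //; last 3 first.
- exact: enum_uniq.
- exact: trivIset_eventXY.
- move=> w; rewrite -bigcup_seq => -[y _ XYw].
  by rewrite (hc _ _ XYw) lee_fin.
rewrite big_enum /= mulr_sumr -sumEFin; apply: eq_bigr => y _.
rewrite (eq_integral (cst (c y)%:E)); last by move=> w; rewrite inE => /hc ->.
rewrite integral_cst //= measure_eventXY PX -!EFinM.
by congr EFin; ring.
Qed.

Lemma measure_eventX_thin (x : outcome) : P (eventX_thin x) = P (eventX x).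
Proof.
have := @integral_eventX_thin x (cst 1%E) (fun=> 1) (measurable_cst _).
rewrite integral_cst // mul1e.
have -> : \sum_(y : range x) 1 * thin_pmf y = 1.
  by rewrite -[RHS](sum_thin_pmf x); apply: eq_bigr => y _; rewrite mul1r.
rewrite mulr1 fineK ?fin_num_measure //.
by apply => // y w _.
Qed.

Lemma eventX_cover w : exists x : outcome, eventX x w.
Proof.
exists [ffun t => projT1 (cid (Xnat t w))] => t.
by rewrite ffunE; exact: projT2 (cid (Xnat t w)).
Qed.

Local Hint Resolve measurable_thin_support : core.

Lemma measure_thin_supportC : P (~` thin_support) = 0.
Proof.
pose gap n := oapp (fun x => eventX x `\` eventX_thin x) set0 (@pickle_inv outcome n).
have gap_null n : P (gap n) = 0.
  rewrite /gap; case: pickle_inv => [x|] /=; last exact: measure0.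
  rewrite measureD //; last by rewrite ltey_eq fin_num_measure.
  rewrite (setIidr (@eventX_thin_sub x)).
  change (P (eventX x) - P (eventX_thin x) = 0)%E.
  by rewrite measure_eventX_thin subee // fin_num_measure.
apply/negligibleP; first exact/measurableC/measurable_thin_support.
apply: (@negligibleS _ _ _ P (\bigcup_n gap n)).
  move=> w notw; have [x Xw] := eventX_cover w.
  exists (pickle x) => //; rewrite /gap pickleK_inv; split => // Xthinw.
  by apply: notw; exists (pickle x) => //; rewrite pickleK_inv.
apply: negligible_bigcup => n; apply/negligibleP; last exact: gap_null.
by rewrite /gap; case: pickle_inv => [x|] /=; [exact: measurableD | exact: measurable0].
Qed.

Lemma integral_thinning (h : Om -> \bar R) (c : forall x : outcome, range x -> R) :
    measurable_fun setT h -> (forall x y, 0 <= c x y) ->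
    (forall (x : outcome) (y : range x) w, eventXY y w -> h w = (c x y)%:E) ->
  (\int[P]_w h w = \sum_(n <oo) oapp (fun x =>
     (fine (P (eventX x)) * \sum_(y : range x) c x y * thin_pmf y)%:E) 0
     (@pickle_inv outcome n))%E.
Proof.
move=> mh c0 hc; have mC := measurableC measurable_thin_support.
have mh' A : measurable_fun A h := measurable_funS measurableT (@subsetT _ A) mh.
rewrite -(setUv thin_support) integral_setU //; last first.
  by apply/disj_set2P; rewrite setICr.
rewrite (null_set_integral mC (mh' _) measure_thin_supportC) adde0.
rewrite ge0_integral_bigcup //; first last.
- exact: trivIset_thin_support.
- move=> w [n _]; case: pickle_inv => //= x.
  by rewrite /eventX_thin -bigcup_seq => -[y _ /hc ->]; rewrite lee_fin.
- by move=> n; case: pickle_inv => //= x.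
apply: eq_eseriesr => n _; case: pickle_inv => [x|] /=; last exact: integral_set0.
by apply: integral_eventX_thin => // y w; exact: hc.
Qed.

Lemma expectation_thinning (f g : Om -> R)
    (cf : forall x : outcome, range x -> R) (cg : outcome -> R) :
    measurable_fun setT f -> measurable_fun setT g -> (forall x y, 0 <= cf x y) ->
    (forall (x : outcome) (y : range x) w, eventXY y w -> f w = cf x y) ->
    (forall x w, eventX x w -> g w = cg x) ->
    (forall x : outcome, \sum_(y : range x) cf x y * thin_pmf y = cg x) ->
  ('E_P[f] = 'E_P[g])%E.
Proof.
move=> mf mg cf0 fE gE cgE; rewrite unlock.
have cg0 x : 0 <= cg x.
  by rewrite -cgE sumr_ge0 // => y _; rewrite mulr_ge0 ?thin_pmf_ge0.
rewrite (@integral_thinning (EFin \o f) cf) //; first last.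
- by move=> x y w /fE /= ->.
- exact/measurable_EFinP.
rewrite (@integral_thinning (EFin \o g) (fun x _ => cg x)) //; first last.
- by move=> x y w XYw /=; rewrite (gE x) // => t; case: (XYw t).
- exact/measurable_EFinP.
apply: eq_eseriesr => n _; case: pickle_inv => //= x.
by rewrite -mulr_sumr sum_thin_pmf mulr1 cgE.
Qed.

Lemma expectation_thinned_monomial (e : 'I_T -> nat) (f g : Om -> R) :
    measurable_fun setT f -> measurable_fun setT g ->
    (forall (x : outcome) (y : range x) w,
      eventXY y w -> f w = \prod_t (y t : nat)%:R ^+ e t) ->
    (forall x w, eventX x w -> g w = \prod_t binomial_moment p (e t) (x t)) ->
  ('E_P[f] = 'E_P[g])%E.
Proof.
move=> mf mg fE gE; apply: (expectation_thinning mf mg _ fE gE).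
  by move=> x y; apply: prodr_ge0 => t _; exact/exprn_ge0/ler0n.
by move=> x; rewrite (sum_thin_pmf_prod x (fun t k => k%:R ^+ e t)).
Qed.

Lemma expectation_thinned i : ('E_P[Y i] = 'E_P[p \o* X i])%E.
Proof.
apply: (@expectation_thinned_monomial (fun t => (t == i : nat))).
- exact: measurable_funPT.
- exact: measurable_funM (measurable_funPT (X i)) (measurable_cst p).
- move=> x y w XYw; rewrite (prodr_delta (G := fun t k => (y t : nat)%:R ^+ k)) //.
  by case: (XYw i) => _ ->.
- move=> x w Xw; rewrite (prodr_delta (G := fun t k => binomial_moment p k (x t))).
    by rewrite binomial_moment1 /= (Xw i) mulrC.
  by move=> t; exact: binomial_moment0.
Qed.

Lemma expectation_thinned_mul i j :
  ('E_P[(Y i : Om -> R) * Y j]%R =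
   'E_P[(p \o* X i) * (p \o* X j) \+ ((i == j)%:R * (p * (1 - p))) \o* X i]%R)%E.
Proof.
have mX k : measurable_fun setT (X k) := measurable_funPT (X k).
have mZ a k : measurable_fun setT (a \o* X k) := measurable_funM (mX k) (measurable_cst a).
apply: (@expectation_thinned_monomial (fun t => (t == i) + (t == j))%N).
- exact: measurable_funM (measurable_funPT (Y i)) (measurable_funPT (Y j)).
- exact: measurable_funD (measurable_funM (mZ _ _) (mZ _ _)) (mZ _ _).
- move=> x y w XYw; rewrite (prodr_delta2 (G := fun t k => (y t : nat)%:R ^+ k)) //=.
  by case: (XYw i) (XYw j) => _ <- [_ <-]; case: eqP => [<-|_]; rewrite ?expr1 ?expr2.
- move=> x w Xw.
  rewrite (prodr_delta2 (G := fun t k => binomial_moment p k (x t))); last first.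
    by move=> t; exact: binomial_moment0.
  rewrite !fctE /= (Xw i) (Xw j); case: eqP => [<-|_] /=.
    by rewrite binomial_moment2; ring.
  by rewrite !binomial_moment1; ring.
Qed.

Hypothesis X2 : forall t, (X t : Om -> R) \in Lfun P 2%:E.

Let X1 t : (X t : Om -> R) \in Lfun P 1 :=
  Lfun_subset12 (fin_num_measure P _ measurableT) (X2 t).

Let scaled_Lfun2 a t : (a \o* X t) \in Lfun P 2%:E.
Proof. by rewrite Lfun_scale ?ler1n. Qed.

Lemma thinned_Lfun2 i : (Y i : Om -> R) \in Lfun P 2%:E.
Proof.
apply: expectation_sqr_lty_Lfun2; first exact: measurable_funPT.
rewrite expr2 expectation_thinned_mul ltey_eq expectation_fin_num //.
by apply: rpredD; [exact: Lfun2_mul_Lfun1 | rewrite Lfun_scale].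
Qed.

Lemma covariance_thinned i j :
  covariance P (Y i) (Y j) = (p ^+ 2 * fine (covariance P (X i) (X j)) +
    (i == j)%:R * (p * (1 - p)) * fine ('E_P[X i])%E)%:E.
Proof.
have Y1 k : (Y k : Om -> R) \in Lfun P 1 :=
  Lfun_subset12 (fin_num_measure P _ measurableT) (thinned_Lfun2 k).
have XX1 := Lfun2_mul_Lfun1 (X2 i) (X2 j).
have pX1 a k : (a \o* X k) \in Lfun P 1 by rewrite Lfun_scale.
have pXX1 a b : ((a \o* X i) * (b \o* X j))%R \in Lfun P 1 :=
  Lfun2_mul_Lfun1 (scaled_Lfun2 a i) (scaled_Lfun2 b j).
have XpX1 : ((X i : Om -> R) \* (p \o* X j)) \in Lfun P 1 :=
  Lfun2_mul_Lfun1 (X2 i) (scaled_Lfun2 p j).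
rewrite covarianceE ?Y1 ?Lfun2_mul_Lfun1 ?thinned_Lfun2 //.
rewrite expectation_thinned_mul !expectation_thinned expectationD ?pX1 ?pXX1 //.
rewrite addeAC -covarianceE ?pX1 ?pXX1 //.
rewrite covarianceZl ?covarianceZr ?expectationZl ?pX1 ?XpX1 //.
rewrite -(fineK (covariance_fin_num (X1 i) (X1 j) XX1)).
rewrite -(fineK (expectation_fin_num (X1 i))) /=.
by rewrite -!EFinM -EFinD; congr EFin; ring.
Qed.

Lemma variance_thinned i :
  fine 'V_P[Y i] = thinned_variance p (fine 'E_P[X i]) (fine 'V_P[X i]).
Proof. by rewrite /variance covariance_thinned eqxx /thinned_variance /=; ring. Qed.

Lemma covariance_thinned_neq i j : i != j ->
  fine (covariance P (Y i) (Y j)) = p ^+ 2 * fine (covariance P (X i) (X j)).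
Proof. by move=> nij; rewrite covariance_thinned (negbTE nij) /=; ring. Qed.

End binomial_thinning.

Lemma correlation_self d (Om : measurableType d) (R : realType)
    (P : probability Om R) (Z : Om -> R) :
  0 < fine 'V_P[Z] -> correlation P Z Z = 1.
Proof.
move=> V0; rewrite /correlation -expr2 sqrtr_sqr gtr0_norm //.
by change (fine 'V_P[Z] / fine 'V_P[Z] = 1); rewrite divff // gt_eqF.
Qed.

Theorem corollary2 (d : measure_display) (Om : measurableType d) (R : realType)
  (P : probability Om R) (T : nat)
  (X : 'I_T -> {RV P >-> R})
  (hXnat : forall t w, exists n : nat, X t w = n%:R)
  (hX2 : forall t, (X t : Om -> R) \in Lfun P 2%:E)
  (hXvar : forall t, (0 < 'V_P[X t])%E)
  (Y : R -> 'I_T -> {RV P >-> R})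
  (hY : forall p, 0 < p <= 1 ->
     binomial_thinning P (fun t => (X t : Om -> R)) (fun t => (Y p t : Om -> R)) p) :
  forall p q : R, 0 < p -> p <= q -> q <= 1 ->
  forall i j : 'I_T,
    `| correlation P (Y p i) (Y p j) | <= `| correlation P (Y q i) (Y q j) |.
Proof.
move=> p q p0 pq q1 i j.
have hp : 0 < p <= 1 by rewrite p0 (le_trans pq q1).
have hq : 0 < q <= 1 by rewrite (lt_le_trans p0 pq) q1.
have r01 (r : R) : 0 < r <= 1 -> 0 <= r <= 1 by case/andP => /ltW -> ->.
have m0 t : 0 <= fine 'E_P[X t].
  by apply/fine_ge0/expectation_ge0 => w; have [n ->] := hXnat t w.
have v0 t : 0 < fine 'V_P[X t].
  by rewrite fine_gt0 // hXvar /= ltey_eq variance_fin_num.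
have VY (r : R) t : 0 < r <= 1 ->
    fine 'V_P[Y r t] = thinned_variance r (fine 'E_P[X t]) (fine 'V_P[X t]).
  by move=> hr; rewrite (variance_thinned (r01 r hr) hXnat (hY r hr) hX2).
have [<-|nij] := eqVneq i j.
  by rewrite !correlation_self ?VY ?thinned_variance_gt0.
rewrite /correlation !(covariance_thinned_neq (r01 _ _) hXnat (hY _ _) hX2 nij) //.
by rewrite !VY //; apply: thinned_correlation_le; rewrite ?p0.
Qed.
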